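(* Every scoring method $f:\mathcal{R}^n\to\mathbb{R}^n$ satisfying neutrality, symmetry and strong order preservation satisfies independence of irrelevant matches.
   Context: Let $N=\{X_1,\dots,X_n\}$. A ranking problem is a pair $(N,A)$ where $A=[a_{ij}]$ is a real $n\times n$ matrix with $a_{ii}=0$, $a_{ij}\ge0$ and $a_{ij}+a_{ji}$ a nonnegative integer for all $i\ne j$. Its results matrix is $R=A-A^\top$ and matches matrix $M=A+A^\top$; the problem is equivalently written $(N,R,M)$, and the sum of $(N,A)$ and $(N,A')$ is $(N,A+A')$. $\mathcal{R}^n$ is the set of ranking problems on $N$; a scoring method is a function $f:\mathcal{R}^n\to\mathbb{R}^n$. Neutrality: for a permutation $\sigma$ of $\{1,\dots,n\}$ let $\sigma(N,A)=(N,A^\sigma)$ with $a^\sigma_{\sigma(i)\sigma(j)}=a_{ij}$; $f$ is neutral if $f_{\sigma(i)}(\sigma(N,A))=f_i(N,A)$ for all $\sigma$, all problems and all $i$. Symmetry: if $R=O$ (zero matrix) then $f_i(N,R,M)=f_j(N,R,M)$ for all $X_i,X_j$. Strong order preservation: for all $(N,A),(N,A')\in\mathcal{R}^n$ and all $X_i,X_j$, if $f_i(N,A)\ge f_j(N,A)$ and $f_i(N,A')\ge f_j(N,A')$, then $f_i(N,A+A')\ge f_j(N,A+A')$, strictly if $f_i(N,A)>f_j(N,A)$ or $f_i(N,A')>f_j(N,A')$. Independence of irrelevant matches: for all $(N,A),(N,A')\in\mathcal{R}^n$ and all four pairwise different players $X_i,X_j,X_k,X_\ell$ such that $A$ and $A'$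 agree in every entry except possibly the entries $(k,\ell)$ and $(\ell,k)$, $f_i(N,A)\ge f_j(N,A)$ implies $f_i(N,A')\ge f_j(N,A')$. *)

From Stdlib Require Import Reals.
From mathcomp Require Import all_boot all_fingroup.
Set Implicit Arguments.
Unset Strict Implicit.
Unset Printing Implicit Defensive.
Open Scope R_scope.

Definition mat (n : nat) := 'I_n -> 'I_n -> R.

Definition ranking_problem (n : nat) (A : mat n) : Prop :=
  forall i j : 'I_n,
    (i = j -> A i j = 0) /\
    (i <> j -> 0 <= A i j /\ exists k : nat, A i j + A j i = INR k).

Definition madd (n : nat) (A A' : mat n) : mat n := fun i j => A i j + A' i j.

Definition results (n : nat) (A : mat n) : mat n := fun i j => A i j - A j i.

(* sigma(N,A) = (N, A^sigma) with a^sigma_{sigma i, sigma j} = a_ij. *)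
Definition mperm (n : nat) (s : {perm 'I_n}) (A : mat n) : mat n :=
  fun x y => A ((s^-1)%g x) ((s^-1)%g y).

(* It is represented as a function on all
   n x n real matrices; only its values on ranking problems matter, since all
   axioms below quantify over ranking problems only. *)
Definition scoring (n : nat) := mat n -> 'I_n -> R.

Definition neutrality_sm (n : nat) (f : scoring n) : Prop :=
  forall (s : {perm 'I_n}) (A : mat n), ranking_problem A ->
    forall i : 'I_n, f (mperm s A) (s i) = f A i.

Definition symmetry_sm (n : nat) (f : scoring n) : Prop :=
  forall A : mat n, ranking_problem A ->
    (forall i j, results A i j = 0) ->
    forall i j : 'I_n, f A i = f A j.

Definition strong_order_preservation (n : nat) (f : scoring n) : Prop :=
  forall A A' : mat n, ranking_problem A -> ranking_problem A' ->
    forall i j : 'I_n,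
      f A i >= f A j -> f A' i >= f A' j ->
      f (madd A A') i >= f (madd A A') j /\
      ((f A i > f A j \/ f A' i > f A' j) ->
         f (madd A A') i > f (madd A A') j).

Definition independence_of_irrelevant_matches (n : nat) (f : scoring n) : Prop :=
  forall A A' : mat n, ranking_problem A -> ranking_problem A' ->
    forall i j k l : 'I_n,
      i <> j -> i <> k -> i <> l -> j <> k -> j <> l -> k <> l ->
      (forall p q : 'I_n, ~ (p = k /\ q = l) -> ~ (p = l /\ q = k) ->
         A p q = A' p q) ->
      f A i >= f A j -> f A' i >= f A' j.

(* Split a problem A along the match between X_k and X_l: A = C + D, where D keeps
   only the entries (k,l), (l,k) and C the rest.  C does not change when the
   result of that match does.  The transposition of X_i and X_j fixes D, so by
   neutrality X_i and X_j tie in D, and strong order preservation then makes the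
   comparison of X_i with X_j in C + D the same as in C. *)
From Stdlib Require Import Reals Lra FunctionalExtensionality.
From mathcomp Require Import all_boot all_fingroup.
Set Implicit Arguments.
Open Scope R_scope.

Definition mask_mat n (m : rel 'I_n) (A : mat n) : mat n :=
  fun p q => if m p q then A p q else 0.

Lemma ranking_problem_mask n (m : rel 'I_n) (A : mat n) :
  symmetric m -> ranking_problem A -> ranking_problem (mask_mat m A).
Proof.
move=> msym HA p q; rewrite /mask_mat (msym q p).
have [A_diag A_off] := HA p q; split.
- by move=> pq; case: (m p q) => //; apply: A_diag.
- move=> pq; case: (m p q); first exact: A_off.
  by split; [lra | exists 0%nat; rewrite /= Rplus_0_l].
Qed.

Lemma madd_mask_maskC n (m : rel 'I_n) (A : mat n) :
  madd (mask_mat (fun p q => ~~ m p q) A) (mask_mat m A) = A.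
Proof.
apply: functional_extensionality => p; apply: functional_extensionality => q.
by rewrite /madd /mask_mat; case: (m p q) => /=; ring.
Qed.

Section OneMatch.

Variables (n : nat) (k l : 'I_n).

Definition on_match (p q : 'I_n) : bool :=
  ((p == k) && (q == l)) || ((p == l) && (q == k)).

Lemma on_match_sym : symmetric on_match.
Proof. by move=> p q; rewrite /on_match orbC; congr (_ || _); apply: andbC. Qed.

Definition match_part := mask_mat on_match.
Definition rest_part := mask_mat (fun p q => ~~ on_match p q).

Lemma ranking_problem_match_part A :
  ranking_problem A -> ranking_problem (match_part A).
Proof. exact/ranking_problem_mask/on_match_sym. Qed.

Lemma ranking_problem_rest_part A :
  ranking_problem A -> ranking_problem (rest_part A).
Proof. by apply: ranking_problem_mask => p q; rewrite on_match_sym. Qed.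

Lemma rest_part_eq (A A' : mat n) :
  (forall p q, ~ (p = k /\ q = l) -> ~ (p = l /\ q = k) -> A p q = A' p q) ->
  rest_part A = rest_part A'.
Proof.
move=> agree; apply: functional_extensionality => p.
apply: functional_extensionality => q; rewrite /rest_part /mask_mat.
case: (boolP (on_match p q)) => //= off; apply: agree => -[ep eq];
  by move: off; rewrite /on_match ep eq !eqxx ?orbT.
Qed.

Lemma mperm_match_part (s : {perm 'I_n}) (A : mat n) :
  s k = k -> s l = l -> mperm s (match_part A) = match_part A.
Proof.
move=> sk sl.
have sVk : (s^-1)%g k = k by rewrite -{1}sk permK.
have sVl : (s^-1)%g l = l by rewrite -{1}sl permK.
have eq_sV x y : ((s^-1)%g x == y) = (x == s y).
  by rewrite -(inj_eq (@perm_inj _ s)) permKV.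
apply: functional_extensionality => x; apply: functional_extensionality => y.
rewrite /mperm /match_part /mask_mat /on_match !eq_sV sk sl.
by case: orP => // -[] /andP[/eqP-> /eqP->]; rewrite ?sVk ?sVl.
Qed.

End OneMatch.

Lemma neutral_score_perm_fixed n (f : scoring n) (s : {perm 'I_n}) (B : mat n) i :
  neutrality_sm f -> ranking_problem B -> mperm s B = B -> f B (s i) = f B i.
Proof. by move=> neu HB sB; rewrite -{1}sB neu. Qed.

Lemma sop_add_tie n (f : scoring n) (C D : mat n) i j :
  strong_order_preservation f -> ranking_problem C -> ranking_problem D ->
  f D i = f D j -> (f (madd C D) i >= f (madd C D) j <-> f C i >= f C j).
Proof.
move=> sop HC HD tie; split=> [geCD | geC].
- apply: Rnot_lt_ge => ltC.
  have [_ gtCD] := sop C D HC HD j i ltac:(lra) ltac:(lra).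
  have := gtCD (or_introl ltC); lra.
- by have [] := sop C D HC HD i j geC ltac:(lra).
Qed.

Theorem proposition4p1 (n : nat) (f : scoring n) :
  neutrality_sm f -> symmetry_sm f -> strong_order_preservation f ->
  independence_of_irrelevant_matches f.
Proof.
move=> neu _ sop A A' HA HA' i j k l ij ik il jk jl kl agree geA.
have swap_fixes B : mperm (tperm i j) (match_part k l B) = match_part k l B.
  by apply: mperm_match_part; apply: tpermD; apply/eqP; congruence.
have tie B : ranking_problem B -> f (match_part k l B) i = f (match_part k l B) j.
  move=> HB; rewrite -{1}(tpermR i j) neutral_score_perm_fixed //.
  exact: ranking_problem_match_part.
have split_cmp B : ranking_problem B ->
    f B i >= f B j <-> f (rest_part k l B) i >= f (rest_part k l B) j.
  move=> HB; rewrite -{1 2}(madd_mask_maskC (on_match k l) B).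
  apply: sop_add_tie => //; [exact: ranking_problem_rest_part
                            | exact: ranking_problem_match_part | exact: tie].
apply/(split_cmp A' HA'); rewrite -(@rest_part_eq _ k l A A' agree).
exact/(split_cmp A HA).
Qed.
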